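(* During the execution of DASH (described in the context) on an initially connected graph, for any node $v$, the quantity $\mathrm{rem}(v)$ does not decrease over any round (a node deletion followed by DASH's healing) in which $v$ is not the deleted node.
   Context: Model: a network is an undirected graph, initially a connected graph $G_0$ on $n$ nodes. In each round an adversary deletes one surviving node $v$ with its incident edges, and then DASH adds edges. $G$ is the current network; $E'$ is the set of healing edges added so far whose endpoints both survive; $G'=(V(G),E')$. $N(u,G)$, $N(u,G')$ are neighbor sets in $G$, $G'$; $\delta(u)=\deg_G(u)-\deg_{G_0}(u)$. DASH: initially every node receives an ID drawn independently and uniformly from $[0,1]$ (its initial ID). When $v$ is deleted (quantities evaluated just before the deletion): partition the nodes of $N(v,G)$ whose current ID differs from that of $v$ into classes of equal current ID; $UN(v,G)$ consists of one node per class, the one with lowest initial ID. Let $S=UN(v,G)\cup N(v,G')$. Order $S$ by increasing $\delta$ and place it in this order into a complete binary tree with $|S|$ positions, filled level by level from the top and left to right; add to the network and to $E'$ the edge between each node of $S$ and the node at its parent position. Then all nodes of the component of $G'$ containing $S$ set their ID to the minimum current ID in $S$. Weights: every node $u$ has weight $w(u)$, initially $1$; when a node $v$ is deleted, $w(v)$ is added to the weight of an arbitrarily chosen node of $N(v,G')$. For a subgraph $H$, $W(H)$ is the sum of the weights of its vertices. For distinct surviving nodes $x,y$, $T(x,y)$ is the connected component of $G'-y$ containing $x$. Define $\mathrm{rem}(v)=\sum_{u\in N(v,G')}W(T(u,v))-\max_{u\in N(v,G')}W(T(u,v))+w(v)$ (the maximum over the empty set being $0$). *)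

From HB Require Import structures.
From mathcomp Require Import all_boot all_order all_algebra.
From mathcomp Require Import reals.

Set Implicit Arguments.
Unset Strict Implicit.
Unset Printing Implicit Defensive.

Import Order.TTheory GRing.Theory Num.Theory.

Section Dash.
(* T : the node set; e0 : edge relation of G_0; id0 : initial IDs. *)
Variables (T : finType) (R : realType) (e0 : rel T) (id0 : T -> R).

(* State of the execution: surviving nodes V(G), edge set of G (stored
   symmetrically as ordered pairs), the set E' of healing edges (also
   symmetric), current IDs and weights. *)
Record state := State {
  alive : {set T};
  gE    : {set T * T};
  hE    : {set T * T};
  cid   : T -> R;
  wt    : T -> nat }.

Definition nbr (A : {set T}) (E : {set T * T}) (u : T) : {set T} :=
  [set x in A | (u, x) \in E].

Definition N_G (st : state) u := nbr (alive st) (gE st) u.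
Definition N_H (st : state) u := nbr (alive st) (hE st) u.

Definition deg0 (u : T) : nat := #|[set x | e0 u x]|.

Definition delta (st : state) (u : T) : int :=
  ((#|N_G st u|)%:Z - (deg0 u)%:Z)%R.

(* UN(v,G): one node per class of equal current ID (different from v's),
   namely the one with lowest initial ID. *)
Definition UN (st : state) (v : T) : {set T} :=
  [set u in N_G st v | (cid st u != cid st v) &&
     [forall u' in N_G st v, (cid st u' == cid st u) ==> (id0 u <= id0 u')%R]].

Definition Sset (st : state) (v : T) : {set T} := UN st v :|: N_H st v.

(* edges of the complete binary tree on the sequence s (0-indexed position
   i >= 1 has parent position (i-1)/2). d is an unused default. *)
Definition tree_edges (s : seq T) (d : T) : {set T * T} :=
  [set p in [seq (nth d s i, nth d s (i.-1)./2) | i <- iota 1 (size s).-1]].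

Definition symE (E : {set T * T}) : {set T * T} :=
  E :|: [set (p.2, p.1) | p in E].

Definition restrict (A : {set T}) (E : {set T * T}) : {set T * T} :=
  [set p in E | (p.1 \in A) && (p.2 \in A)].

Definition hrel (E : {set T * T}) : rel T := fun x y => (x, y) \in E.

(* One round: the adversary deletes v; c is the arbitrarily chosen node
   receiving w(v) (None iff N(v,G') is empty); s is the ordering of S by
   increasing delta (ties broken arbitrarily). *)
Definition step (st : state) (v : T) (c : option T) (s : seq T)
    (st' : state) : Prop :=
  [/\ v \in alive st,
      match c with
      | Some c0 => c0 \in N_H st v
      | None => N_H st v = set0
      end,
      perm_eq s (enum (Sset st v)),
      sorted (fun a b => (delta st a <= delta st b)%R) s &
      st' =
        let A' := alive st :\ v in
        let TE := symE (tree_edges s v) in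
        let H' := restrict A' (hE st) :|: TE in
        State A' (restrict A' (gE st) :|: TE) H'
          (fun u =>
             match [pick m in Sset st v |
                     [forall y in Sset st v, (cid st m <= cid st y)%R]] with
             | Some m =>
                 if [exists y in Sset st v, connect (hrel H') y u]
                 then cid st m else cid st u
             | None => cid st u
             end)
          (fun u => (wt st u + (if c == Some u then wt st v else 0))%N)].

Definition init : state :=
  State setT [set p | e0 p.1 p.2] set0 id0 (fun _ => 1%N).

Inductive reachable : state -> Prop :=
| reach0 : reachable init
| reachS st v c s st' : reachable st -> step st v c s st' -> reachable st'.

(* W(T(u,v)): total weight of the component of G' - v containing u. *)
Definition compW (st : state) (v u : T) : nat :=
  \sum_(x in alive st |
        connect (fun a b => [&& (a, b) \in hE st, a != v & b != v]) u x)
    wt st x.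

Definition remv (st : state) (v : T) : nat :=
  (\sum_(u in N_H st v) compW st v u - \max_(u in N_H st v) compW st v u
   + wt st v)%N.

End Dash.

From HB Require Import structures.
From mathcomp Require Import all_boot all_order all_algebra.
From mathcomp Require Import reals.
From mathcomp Require Import zify.

Set Implicit Arguments.
Unset Strict Implicit.
Unset Printing Implicit Defensive.
Import Order.TTheory GRing.Theory Num.Theory.

(* DASH maintains the invariant [dash_inv]: the healing edges E' form a forest
   on the surviving nodes, and the current ID is constant on each component of
   G'.  When x is deleted, distinct nodes of S lie in distinct components of
   G' - x: the nodes of UN(x) have pairwise distinct IDs, all different from
   the ID of x, while the nodes of N(x, G') carry that ID and lie in distinct
   branches at x.  Hence the tree on S closes no cycle, and the ID update keeps
   IDs constant on the merged component.

   As G' is a forest, the branches T(u, v), u in N(v, G'), are disjoint, and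
   rem(v) - w(v) is the least weight of a union of all of them but one.  Given
   the branch T(m, v) left out after the round, one leaves out a suitable
   branch T(u0, v) before it: branches avoiding x survive unchanged; if x was
   adjacent to v, the branch at x splits among new neighbours of v taken from
   S; otherwise v is not in S and the tree on S keeps the branch through x
   connected.  The weight of x moves to a G'-neighbour of x, which is v or lies
   in one of the counted branches.  Neither the connectivity of G_0, nor the
   range of the IDs, nor the order in which S fills the tree plays a role. *)

Section Connect.
Variable T : finType.
Implicit Types e : rel T.

Lemma connect_ind_last e (P : T -> Prop) a :
  P a -> (forall y z, connect e a y -> P y -> e y z -> P z) ->
  forall z, connect e a z -> P z.
Proof.
move=> Pa Pe z /connectP [p e_p ->].
suff IH b : connect e a b -> P b -> path e b p -> P (last b p) by exact: IH.
elim: p b {e_p} => [|y p IHp] b ab Pb //= /andP [eby e_p].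
by apply: IHp e_p; [apply: connect_trans ab (connect1 eby) | apply: Pe eby].
Qed.

Lemma connect_mono e e' : subrel e e' -> subrel (connect e) (connect e').
Proof. by move=> ee'; apply: connect_sub => a b /ee' /connect1. Qed.

Lemma connect_neq_pred e a b : connect e a b -> a != b -> exists y, e y b.
Proof.
move=> ab a_neq_b.
have : a = b \/ exists y, e y b.
  apply: (connect_ind_last (P := fun z => a = z \/ exists y, e y z)) ab => [|y z _ _ eyz].
    by left.
  by right; exists y.
by case=> // a_eq_b; rewrite a_eq_b eqxx in a_neq_b.
Qed.

Definition avoid e (v : T) : rel T := fun a b => [&& e a b, a != v & b != v].

Lemma avoid_sym e v : symmetric e -> symmetric (avoid e v).
Proof. by move=> sym_e a b; rewrite /avoid sym_e; case: (e b a); rewrite //= andbC. Qed.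

Lemma connect_first_entry e t v : connect e t v -> t != v ->
  exists y, e y v /\ connect (avoid e v) t y.
Proof.
move=> tv t_neq_v.
have off_v : forall z, connect (avoid e v) t z -> z != v.
  by apply: connect_ind_last => // y z _ _ /and3P [].
have : connect (avoid e v) t v \/ exists y, e y v /\ connect (avoid e v) t y.
  apply: (connect_ind_last (P := fun z =>
    connect (avoid e v) t z \/ exists y, e y v /\ connect (avoid e v) t y)) tv.
    by left; apply: connect0.
  move=> y z _ [ty eyz|found _]; last by right.
  have yv := off_v _ ty.
  have [zv|zv] := eqVneq z v; first by right; exists y; split => //; rewrite -zv.
  by left; apply: connect_trans ty (connect1 _); rewrite /avoid eyz yv zv.
by case=> // /off_v; rewrite eqxx.
Qed.

End Connect.

Section Forest.
Variable T : finType.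
Implicit Types (E : {set T * T}) (a b y z : T).

Definition del_edge E a b : rel T :=
  fun y z => [&& (y, z) \in E, (y, z) != (a, b) & (y, z) != (b, a)].

(* For a symmetric edge set: the graph is a forest. *)
Definition acyclic E := forall a b, (a, b) \in E -> ~~ connect (del_edge E a b) a b.

Lemma del_edgeC E a b : del_edge E a b =2 del_edge E b a.
Proof. by move=> y z; rewrite /del_edge; case: ((y, z) \in E); rewrite //= andbC. Qed.

Lemma del_edge_sym E a b :
  (forall y z, (y, z) \in E -> (z, y) \in E) -> symmetric (del_edge E a b).
Proof.
move=> sym_E.
suff flip y z : del_edge E a b y z -> del_edge E a b z y.
  by move=> y z; apply/idP/idP; apply: flip.
case/and3P=> yz ab ba; apply/and3P; split; first exact: sym_E.
  by move: ba; rewrite !xpair_eqE andbC.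
by move: ab; rewrite !xpair_eqE andbC.
Qed.

Lemma connect_del_edge_split E a b z : connect (hrel E) a z ->
  connect (del_edge E a b) a z \/ connect (del_edge E a b) b z.
Proof.
apply: (connect_ind_last (P := fun z =>
  connect (del_edge E a b) a z \/ connect (del_edge E a b) b z)) => [|y {}z _ ay yz].
  by left; apply: connect0.
have [yz_del | ] := boolP (del_edge E a b y z).
  by case: ay => ay; [left | right]; apply: connect_trans ay (connect1 yz_del).
rewrite /del_edge (yz : (y, z) \in E) /= negb_and !negbK.
by case/orP => /eqP [_ ->]; [right | left]; apply: connect0.
Qed.

Lemma mem_symE E y z : ((y, z) \in symE E) = ((y, z) \in E) || ((z, y) \in E).
Proof.
rewrite /symE in_setU; congr (_ || _).
apply/imsetP/idP => [[[p1 p2] pE [-> ->]] // | zy]; by exists (z, y).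
Qed.

Lemma symE_sym E y z : (y, z) \in symE E -> (z, y) \in symE E.
Proof. by rewrite !mem_symE orbC. Qed.

End Forest.

Definition parent (i : nat) : nat := (i.-1)./2.

Lemma parent_lt i : 0 < i -> parent i < i.
Proof. by move=> i_gt0; rewrite /parent ltn_half_double; lia. Qed.

Lemma parent_le i : parent i <= i.
Proof. by case: i => // i; apply/ltnW/parent_lt. Qed.

Lemma iter_parent_le j k : iter j parent k <= k.
Proof. by elim: j => //= j IHj; apply: leq_trans (parent_le _) IHj. Qed.

Section BinaryTree.
Variables (T : finType) (s : seq T) (d : T).

Local Notation E := (symE (tree_edges s d)).

Lemma mem_tree_edges y z : ((y, z) \in tree_edges s d) <->
  exists i, [/\ 0 < i, i < size s, y = nth d s i & z = nth d s (parent i)].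
Proof.
rewrite /tree_edges inE; split.
  by case/mapP => i; rewrite mem_iota => /andP [i1 i2] [-> ->]; exists i; split => //; lia.
by case=> i [i1 i2 -> ->]; apply/mapP; exists i => //; rewrite mem_iota; lia.
Qed.

Lemma tree_edges_mem y z : (y, z) \in E -> (y \in s) && (z \in s).
Proof.
by rewrite mem_symE => /orP [] /mem_tree_edges [i [_ i_lt -> ->]];
  rewrite !mem_nth //; apply: leq_ltn_trans (parent_le i) i_lt.
Qed.

Lemma tree_hrel_sym : symmetric (hrel E).
Proof. by move=> y z; apply/idP/idP; apply: symE_sym. Qed.

Lemma tree_connect_root i : i < size s -> connect (hrel E) (nth d s i) (nth d s 0).
Proof.
elim/ltn_ind: i => -[_ _|i IHi i_lt]; first exact: connect0.
have pi_lt : parent i.+1 < size s by apply: leq_ltn_trans (parent_le _) i_lt.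
apply: connect_trans (IHi _ (parent_lt _) pi_lt) => //.
apply: connect1; rewrite /hrel mem_symE; apply/orP; left.
by apply/mem_tree_edges; exists i.+1.
Qed.

Lemma tree_connect a b : a \in s -> b \in s -> connect (hrel E) a b.
Proof.
move=> a_s b_s; rewrite -(nth_index d a_s) -(nth_index d b_s).
apply: connect_trans (tree_connect_root _) _; first by rewrite index_mem.
by rewrite (sym_connect_sym tree_hrel_sym) tree_connect_root // index_mem.
Qed.

Hypothesis s_uniq : uniq s.

Definition in_subtree i y :=
  exists k, [/\ k < size s, nth d s k = y & exists j, iter j parent k = i].

Lemma subtree_closed i y z : 0 < i < size s ->
  del_edge E (nth d s i) (nth d s (parent i)) y z -> in_subtree i y -> in_subtree i z.
Proof.
move=> /andP [i_gt0 i_lt] /and3P [yz not_up not_down] [k [k_lt yk [j jk]]].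
have nth_inj k' : k' < size s -> nth d s k' = y -> k = k'.
  by move=> k'_lt k'y; apply/eqP; rewrite -(nth_uniq d k_lt k'_lt s_uniq) yk k'y.
move: yz; rewrite mem_symE => /orP [] /mem_tree_edges [k' [k'_gt0 k'_lt ey ez]].
- have {}k'k := nth_inj k' k'_lt (esym ey); subst k' y z.
  case: j jk => [/= ki|j jk]; first by rewrite ki eqxx in not_up.
  exists (parent k); split => //; first by apply: leq_ltn_trans (parent_le k) k_lt.
  by exists j; rewrite -iterSr.
- have pk_lt : parent k' < size s by apply: leq_ltn_trans (parent_le k') k'_lt.
  have {}kk' := nth_inj _ pk_lt (esym ez); subst k y z.
  by exists k'; split => //; exists j.+1; rewrite iterSr.
Qed.

Lemma tree_acyclic : acyclic E.
Proof.
have bridge i : 0 < i < size s ->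
    ~~ connect (del_edge E (nth d s i) (nth d s (parent i))) (nth d s i) (nth d s (parent i)).
  move=> i_ok; have /andP [i_gt0 i_lt] := i_ok; apply/negP => ipi.
  have [k [k_lt kp [j jk]]] : in_subtree i (nth d s (parent i)).
    apply: (connect_ind_last (P := in_subtree i)) ipi; last first.
      by move=> y z _ yi yz; apply: subtree_closed i_ok yz yi.
    by exists i; split => //; exists 0.
  have pi_lt := leq_ltn_trans (parent_le i) i_lt.
  have {}kp : k = parent i by apply/eqP; rewrite -(nth_uniq d k_lt pi_lt s_uniq) kp.
  by subst k; have := iter_parent_le j (parent i); rewrite jk leqNgt parent_lt.
move=> a b; rewrite mem_symE => /orP [] /mem_tree_edges [i [i_gt0 i_lt -> ->]].
  by apply: bridge; rewrite i_gt0.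
rewrite (eq_connect (del_edgeC _ _ _)) (sym_connect_sym (del_edge_sym _ _ _)).
  by apply: bridge; rewrite i_gt0.
exact: symE_sym.
Qed.

End BinaryTree.

Section Invariant.
Variables (T : finType) (R : realType).

Record dash_inv (st : state T R) : Prop := {
  heal_sym : forall a b, (a, b) \in hE st -> (b, a) \in hE st;
  heal_alive : forall a b, (a, b) \in hE st -> (a \in alive st) && (b \in alive st);
  graph_irrefl : forall a, (a, a) \notin gE st;
  heal_acyclic : acyclic (hE st);
  heal_cid : forall a b, connect (hrel (hE st)) a b -> cid st a = cid st b }.

Variable st : state T R.
Hypothesis inv : dash_inv st.

Lemma heal_irrefl a : (a, a) \notin hE st.
Proof. by apply/negP => /(heal_acyclic inv); rewrite connect0. Qed.

Lemma hrel_heal_sym : symmetric (hrel (hE st)).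
Proof. by move=> y z; apply/idP/idP; apply: (heal_sym inv). Qed.

Lemma mem_N_H u v : (u \in N_H st v) = ((v, u) \in hE st).
Proof.
rewrite /N_H /nbr inE; case vu: ((v, u) \in hE st); last by rewrite andbF.
by have /andP [_ ->] := heal_alive inv vu.
Qed.

Lemma avoid_connect_heal v a b :
  connect (avoid (hrel (hE st)) v) a b -> connect (hrel (hE st)) a b.
Proof. by apply: connect_mono => y z /and3P []. Qed.

Lemma branch_uniq v u1 u2 : u1 \in N_H st v -> u2 \in N_H st v ->
  connect (avoid (hrel (hE st)) v) u1 u2 -> u1 = u2.
Proof.
rewrite !mem_N_H => vu1 vu2 u1u2; apply/eqP; apply: contraTT u1u2 => u1_neq_u2.
apply: contra (heal_acyclic inv (heal_sym inv vu1)) => u1u2.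
have u2v : u2 != v by apply: contraTneq vu2 => ->; apply: heal_irrefl.
apply: connect_trans (connect1 (_ : del_edge _ u1 v u2 v)).
  apply: connect_mono u1u2 => y z /and3P [yz yv zv]; apply/and3P; split => //.
    by rewrite xpair_eqE (negbTE zv) andbF.
  by rewrite xpair_eqE (negbTE yv).
apply/and3P; split; first exact: (heal_sym inv).
  by rewrite xpair_eqE eq_sym (negbTE u1_neq_u2).
by rewrite xpair_eqE (negbTE u2v).
Qed.

End Invariant.

Lemma mem_N_G (T : finType) (R : realType) (st : state T R) u y :
  (y \in N_G st u) = (y \in alive st) && ((u, y) \in gE st).
Proof. by rewrite /N_G /nbr inE. Qed.

Lemma mem_UN (T : finType) (R : realType) (id0 : T -> R) (st : state T R) x y :
  (y \in UN id0 st x) =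
  [&& y \in N_G st x, cid st y != cid st x &
      [forall u in N_G st x, (cid st u == cid st y) ==> (id0 y <= id0 u)%R]].
Proof. by rewrite /UN inE. Qed.

Section Step.
Variables (T : finType) (R : realType) (id0 : T -> R) (st : state T R) (x : T) (s : seq T).
Hypothesis inv : dash_inv st.
Hypothesis s_perm : perm_eq s (enum (Sset id0 st x)).

Local Notation Sx := (Sset id0 st x).

Definition survivors := alive st :\ x.
Definition treeE := symE (tree_edges s x).
Definition keptE := restrict survivors (hE st).
Definition healE := keptE :|: treeE.

Lemma mem_s y : (y \in s) = (y \in Sx).
Proof. by rewrite (perm_mem s_perm) mem_enum. Qed.

Lemma s_uniq : uniq s.
Proof. by rewrite (perm_uniq s_perm) enum_uniq. Qed.

Lemma mem_Sx y : (y \in Sx) = (y \in UN id0 st x) || ((x, y) \in hE st).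
Proof. by rewrite /Sset in_setU (mem_N_H inv). Qed.

Lemma Sx_survivors y : y \in Sx -> y \in survivors.
Proof.
rewrite mem_Sx mem_UN mem_N_G /survivors in_setD1.
case/orP => [/and3P [/andP [yA xy] _ _] | xy].
  by rewrite yA andbT; apply: contraTneq xy => ->; apply: (graph_irrefl inv).
have /andP [_ ->] := heal_alive inv xy.
by rewrite andbT; apply: contraTneq xy => ->; apply: heal_irrefl.
Qed.

Lemma mem_keptE y z : ((y, z) \in keptE) = [&& (y, z) \in hE st, y != x & z != x].
Proof.
rewrite /keptE /restrict /survivors !inE /=.
case yz: ((y, z) \in hE st) => //=.
by have /andP [-> ->] := heal_alive inv yz; rewrite !andbT.
Qed.

Lemma keptE_sym y z : (y, z) \in keptE -> (z, y) \in keptE.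
Proof. by rewrite !mem_keptE => /and3P [yz -> ->]; rewrite (heal_sym inv yz). Qed.

Lemma treeE_Sx y z : (y, z) \in treeE -> (y \in Sx) && (z \in Sx).
Proof. by move/tree_edges_mem; rewrite !mem_s. Qed.

Lemma mem_healE y z : ((y, z) \in healE) = ((y, z) \in keptE) || ((y, z) \in treeE).
Proof. by rewrite in_setU. Qed.

Lemma healE_sym y z : (y, z) \in healE -> (z, y) \in healE.
Proof.
by rewrite !mem_healE => /orP [/keptE_sym -> | /symE_sym ->]; rewrite ?orbT.
Qed.

Lemma hrel_keptE_sym : symmetric (hrel keptE).
Proof. by move=> y z; apply/idP/idP; apply: keptE_sym. Qed.

Lemma hrel_healE_sym : symmetric (hrel healE).
Proof. by move=> y z; apply/idP/idP; apply: healE_sym. Qed.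

Lemma kept_connect_avoid y z :
  connect (hrel keptE) y z -> connect (avoid (hrel (hE st)) x) y z.
Proof. by apply: connect_mono => a b; rewrite /hrel mem_keptE. Qed.

Lemma kept_connect_heal y z : connect (hrel keptE) y z -> connect (hrel (hE st)) y z.
Proof. by move/kept_connect_avoid; apply: avoid_connect_heal. Qed.

Lemma cid_N_H y : (x, y) \in hE st -> cid st y = cid st x.
Proof. by move=> xy; symmetry; apply/(heal_cid inv)/connect1. Qed.

Hypothesis id0_inj : injective id0.

(* The nodes of UN(x) have pairwise distinct IDs (the IDs within a class are
   equal, the initial IDs are distinct), all different from the ID of x, which
   is the ID of every node of N(x, G'). *)
Lemma Sx_kept_separated s1 s2 :
  s1 \in Sx -> s2 \in Sx -> connect (hrel keptE) s1 s2 -> s1 = s2.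
Proof.
move=> s1S s2S s1s2; have cid12 := heal_cid inv (kept_connect_heal s1s2).
move: s1S s2S; rewrite !mem_Sx => /orP [UN1|xs1] /orP [UN2|xs2].
- move: UN1 UN2; rewrite !mem_UN => /and3P [N1 _ min1] /and3P [N2 _ min2].
  apply: id0_inj; apply/eqP; rewrite eq_le.
  move/forallP: min1 => /(_ s2); rewrite N2 cid12 eqxx /= => ->.
  by move/forallP: min2 => /(_ s1); rewrite N1 cid12 eqxx.
- by move: UN1; rewrite mem_UN cid12 (cid_N_H xs2) eqxx andbF.
- by move: UN2; rewrite mem_UN -cid12 (cid_N_H xs1) eqxx andbF.
- by apply: (branch_uniq inv (v := x)); rewrite ?(mem_N_H inv) //; apply: kept_connect_avoid.
Qed.

Lemma keptE_acyclic : acyclic keptE.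
Proof.
move=> a b; rewrite mem_keptE => /and3P [ab _ _].
apply: contra (heal_acyclic inv ab); apply: connect_mono => y z.
by rewrite /del_edge mem_keptE => /and3P [/and3P [-> _ _] -> ->].
Qed.

Lemma treeE_bridge a b : (a, b) \in treeE -> ~~ connect (del_edge healE a b) a b.
Proof.
move=> ab; apply: contra (tree_acyclic s_uniq ab) => ab_healE.
have /andP [aS bS] := treeE_Sx ab.
(* Contract the kept edges: every node reached from [a] is kept-connected to
   a node of Sx reached from [a] along the tree without the edge ab. *)
have [d dS [ad bd]] : exists2 d, d \in Sx &
    connect (del_edge treeE a b) a d /\ connect (hrel keptE) b d.
  apply: (connect_ind_last (P := fun z => exists2 d, d \in Sx &
           connect (del_edge treeE a b) a d /\ connect (hrel keptE) z d)) ab_healE.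
    by exists a => //; split; apply: connect0.
  move=> y z _ [d dS [ad yd]] /and3P [yz not_ab not_ba].
  move: yz; rewrite mem_healE => /orP [yz | yz].
    by exists d => //; split => //; apply: connect_trans yd; apply/connect1/keptE_sym.
  have /andP [yS zS] := treeE_Sx yz.
  have yd_eq := Sx_kept_separated yS dS yd; subst d.
  exists z => //; split; last exact: connect0.
  by apply: connect_trans ad (connect1 _); rewrite /del_edge yz not_ab not_ba.
by rewrite -(Sx_kept_separated bS dS bd) in ad.
Qed.

Lemma keptE_bridge_healE a b : (a, b) \in keptE ->
  (forall d, d \in Sx -> connect (hrel keptE) a d -> connect (del_edge keptE a b) a d) ->
  ~~ connect (del_edge healE a b) a b.
Proof.
move=> ab Sx_side; apply/negP => ab_healE.
have : connect (del_edge keptE a b) a b \/ ~ connect (hrel keptE) a b.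
  apply: (connect_ind_last (P := fun z =>
    connect (del_edge keptE a b) a z \/ ~ connect (hrel keptE) a z)) ab_healE.
    by left; apply: connect0.
  move=> y z _ ay /and3P [yz not_ab not_ba]; move: yz; rewrite mem_healE.
  case/orP => [yz | /treeE_Sx /andP [_ zS]]; last first.
    by have [/(Sx_side z zS) | ] := boolP (connect (hrel keptE) a z); [left | right].
  case: ay => [ay | not_ay]; first by left; apply: connect_trans ay (connect1 _);
    rewrite /del_edge yz not_ab not_ba.
  by right => az; apply: not_ay; apply: connect_trans az (connect1 (keptE_sym yz)).
case=> [| []]; last exact: connect1.
by apply/negP; apply: keptE_acyclic.
Qed.

(* The kept component of [a] contains at most one node of Sx, so one of the
   two sides of the kept edge ab carries no tree edge. *)
Lemma keptE_bridge a b : (a, b) \in keptE -> ~~ connect (del_edge healE a b) a b.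
Proof.
move=> ab; have ba := keptE_sym ab.
have [/exists_inP [d dS /andP [ad not_ad]] | none] := boolP
  [exists d in Sx, connect (hrel keptE) a d && ~~ connect (del_edge keptE a b) a d].
  have bd : connect (del_edge keptE a b) b d.
    by case: (connect_del_edge_split b ad) not_ad => ->.
  have -> : connect (del_edge healE a b) a b = connect (del_edge healE b a) b a.
    rewrite (eq_connect (del_edgeC _ _ _)).
    by rewrite (sym_connect_sym (del_edge_sym b a healE_sym)).
  apply: keptE_bridge_healE ba _ => d' d'S bd'.
  have -> // : d' = d.
    apply: Sx_kept_separated d'S dS (connect_trans _ ad).
    rewrite (sym_connect_sym hrel_keptE_sym).
    exact: connect_trans (connect1 (ab : hrel keptE a b)) bd'.
  by rewrite (eq_connect (del_edgeC _ _ _)).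
apply: keptE_bridge_healE ab _ => d dS ad.
by apply: contraNT none => not_ad; apply/exists_inP; exists d; rewrite // ad.
Qed.

Lemma healE_acyclic : acyclic healE.
Proof.
by move=> a b; rewrite mem_healE => /orP [/keptE_bridge | /treeE_bridge].
Qed.

Lemma heal_connect_kept a b : ~ (exists2 y, y \in Sx & connect (hrel healE) y a) ->
  connect (hrel healE) a b -> connect (hrel keptE) a b.
Proof.
move=> no_Sx; apply: (connect_ind_last (P := connect (hrel keptE) a)) => [|y z ya ay].
  exact: connect0.
rewrite /hrel mem_healE => /orP [yz | /treeE_Sx /andP [yS _]].
  by apply: connect_trans ay (connect1 _).
by case: no_Sx; exists y; rewrite // (sym_connect_sym hrel_healE_sym).
Qed.

Definition new_cid u :=
  match [pick m in Sx | [forall y in Sx, (cid st m <= cid st y)%R]] with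
  | Some m => if [exists y in Sx, connect (hrel healE) y u] then cid st m else cid st u
  | None => cid st u
  end.

Lemma new_cid_connect a b : connect (hrel healE) a b -> new_cid a = new_cid b.
Proof.
move=> ab.
have old_cid : ~ (exists2 y, y \in Sx & connect (hrel healE) y a) -> cid st a = cid st b.
  by move=> no_Sx; apply/(heal_cid inv)/kept_connect_heal/heal_connect_kept.
have Sx_ab y : connect (hrel healE) y a = connect (hrel healE) y b.
  by apply/idP/idP => [/connect_trans -> // | /connect_trans ->] //;
    rewrite (sym_connect_sym hrel_healE_sym).
rewrite /new_cid; case: pickP => [m _ | no_min].
  rewrite (eq_existsb_in (fun y _ => Sx_ab y)).
  case: ifP => // no_Sx_b; apply: old_cid => -[y yS ya].
  move/negbT: no_Sx_b; rewrite negb_exists_in => /forall_inP /(_ y yS).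
  by rewrite -Sx_ab ya.
apply: old_cid => -[y0 y0S _].
have := no_min (Order.arg_min y0 (fun i => i \in Sx) (cid st)).
case: arg_minP => // m mS m_min; rewrite mS /=.
by move/negP; apply; apply/forall_inP.
Qed.

Section Branches.
Variable v : T.
Hypothesis v_neq_x : v != x.

Local Notation inT := (connect (avoid (hrel (hE st)) v)).
Local Notation inT' := (connect (avoid (hrel healE) v)).
Local Notation N := (N_H st v).
Local Notation N' := (nbr survivors healE v).

Lemma avoid_sym_heal : symmetric (avoid (hrel (hE st)) v).
Proof. exact/avoid_sym/hrel_heal_sym. Qed.

Lemma avoid_sym_healE : symmetric (avoid (hrel healE) v).
Proof. exact/avoid_sym/hrel_healE_sym. Qed.

Lemma avoid_kept y z :
  avoid (hrel (hE st)) v y z -> y != x -> z != x -> avoid (hrel healE) v y z.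
Proof.
rewrite /avoid /hrel => /and3P [yz yv zv] yx zx.
by rewrite mem_healE mem_keptE yz yx zx yv zv.
Qed.

Lemma N_N' u : u \in N -> u != x -> u \in N'.
Proof.
rewrite (mem_N_H inv) /nbr inE mem_healE mem_keptE => vu ux.
have /andP [vA uA] := heal_alive inv vu.
by rewrite /survivors in_setD1 ux uA vu v_neq_x.
Qed.

Lemma branch_keep u : u \in N -> ~~ inT u x -> forall y, inT u y -> inT' u y.
Proof.
move=> uN not_ux; apply: (connect_ind_last (P := inT' u)) => [|a b ua u'a ab].
  exact: connect0.
have ax : a != x by apply: contraNneq not_ux => <-.
have bx : b != x by apply: contraNneq not_ux => <-; apply: connect_trans ua (connect1 ab).
by apply: connect_trans u'a (connect1 _); apply: avoid_kept.
Qed.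

Lemma branch_x_uniq u1 u2 : u1 \in N -> u2 \in N -> inT u1 x -> inT u2 x -> u1 = u2.
Proof.
move=> u1N u2N u1x u2x; apply: (branch_uniq inv u1N u2N).
by apply: connect_trans u1x _; rewrite (sym_connect_sym avoid_sym_heal).
Qed.

Lemma cid_branch_x u : u \in N -> inT u x -> cid st v = cid st x.
Proof.
rewrite (mem_N_H inv) => vu ux; apply: (heal_cid inv).
exact: connect_trans (connect1 vu) (avoid_connect_heal ux).
Qed.

Lemma Sx_connect_avoid : v \notin Sx -> forall t1 t2, t1 \in Sx -> t2 \in Sx -> inT' t1 t2.
Proof.
move=> vS t1 t2 t1S t2S; have := tree_connect x (_ : t1 \in s) (_ : t2 \in s).
rewrite !mem_s => /(_ t1S t2S); apply: connect_mono => y z yz.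
have /andP [yS zS] := treeE_Sx yz.
rewrite /avoid /hrel mem_healE (yz : (y, z) \in treeE) orbT /=.
by apply/andP; split; apply: contraNneq vS => <-.
Qed.

(* If v and x are not adjacent in G', then v is not in Sx (it carries the ID
   of x, and is not adjacent to x), so the tree on Sx, which contains every
   G'-neighbour of x, reconnects the branch through x without passing v. *)
Lemma branch_through_tree u : u \in N -> inT u x -> u != x -> (x, v) \notin hE st ->
  forall y, inT u y -> y != x -> inT' u y.
Proof.
move=> uN ux u_neq_x not_xv.
have vS : v \notin Sx.
  by rewrite mem_Sx mem_UN (cid_branch_x uN ux) eqxx andbF (negbTE not_xv).
have tree := Sx_connect_avoid vS.
move=> y uy; suff [] : (y != x -> inT' u y) /\ (y = x -> forall t, t \in Sx -> inT' u t) by [].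
apply: (connect_ind_last (P := fun z => (z != x -> inT' u z) /\
                          (z = x -> forall t, t \in Sx -> inT' u t))) uy.
  by split => [_ | u_eq_x]; [apply: connect0 | rewrite u_eq_x eqxx in u_neq_x].
move=> a b _ [Pa_off Pa_on] ab; have abH : (a, b) \in hE st by case/and3P: ab.
have [ax | ax] := eqVneq a x; have [bx | bx] := eqVneq b x.
- by split => [/eqP | _]; [rewrite bx | apply: Pa_on].
- have bS : b \in Sx by rewrite mem_Sx -ax abH orbT.
  by split => [_ | /eqP]; [apply: Pa_on | rewrite (negbTE bx)].
- have aS : a \in Sx by rewrite mem_Sx -bx (heal_sym inv abH) orbT.
  split => [/eqP | _ t tS]; first by rewrite bx.
  exact: connect_trans (Pa_off ax) (tree _ _ aS tS).
- split => [_ | /eqP]; last by rewrite (negbTE bx).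
  by apply: connect_trans (Pa_off ax) (connect1 _); apply: avoid_kept.
Qed.

Local Notation covered u0 y := [exists u in N :\ u0, inT u y].
Local Notation covered' m y := [exists u in N' :\ m, inT' u y].

(* If v and x are adjacent in G', then v is in Sx, and each node of Sx other
   than v reaches v along the tree: its last step before v enters v from a new
   neighbour of v. *)
Lemma Sx_covered' m : (x, v) \in hE st -> m \notin Sx ->
  forall t, t \in Sx -> t != v -> covered' m t.
Proof.
move=> xv mS t tS tv.
have vS : v \in Sx by rewrite mem_Sx xv orbT.
have tv_tree : connect (hrel treeE) t v by apply: tree_connect; rewrite mem_s.
have [n [nv tn]] := connect_first_entry tv_tree tv.
have /andP [nS _] := treeE_Sx nv.
apply/exists_inP; exists n.
  rewrite in_setD1 /nbr inE (Sx_survivors nS) mem_healE (symE_sym nv) orbT.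
  by apply/andP; split => //; apply: contraNneq mS => <-.
rewrite (sym_connect_sym avoid_sym_healE); apply: connect_mono tn => a b.
case/and3P=> ab av bv.
by rewrite /avoid /hrel mem_healE (ab : (a, b) \in treeE) orbT av bv.
Qed.

Lemma branch_pieces m : (x, v) \in hE st -> m \notin Sx ->
  forall y, inT x y -> y != x -> covered' m y.
Proof.
move=> xv mS y xy; suff [-> /eqP // | ] : y = x \/ covered' m y by [].
apply: (connect_ind_last (P := fun z => z = x \/ covered' m z)) xy; first by left.
move=> a b _ xa ab; have [-> | bx] := eqVneq b x; [by left | right].
have [ax | ax] := eqVneq a x.
  subst a; case/and3P: ab => xb _ bv.
  by apply: Sx_covered' => //; rewrite mem_Sx (xb : (x, b) \in hE st) orbT.
case: xa => [a_eq_x | /exists_inP [n nN' na]]; first by rewrite a_eq_x eqxx in ax.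
apply/exists_inP; exists n => //.
by apply: connect_trans na (connect1 _); apply: avoid_kept.
Qed.

Lemma N_adjacent_notin_Sx m : (x, v) \in hE st -> m \in N -> m != x -> m \notin Sx.
Proof.
move=> xv mN m_neq_x; have xN : x \in N by rewrite (mem_N_H inv) (heal_sym inv xv).
have cid_m : cid st m = cid st x.
  rewrite -(cid_N_H xv); symmetry; apply/(heal_cid inv)/connect1.
  by rewrite /hrel -(mem_N_H inv).
rewrite mem_Sx mem_UN cid_m eqxx andbF /=.
apply: contraNN m_neq_x => xm; apply/eqP/(branch_x_uniq mN xN _ (connect0 _ _)).
have mv : m != v by apply: contraTneq mN => ->; rewrite (mem_N_H inv) heal_irrefl.
by apply: connect1; rewrite /avoid /hrel (heal_sym inv xm) mv eq_sym v_neq_x.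
Qed.

Lemma adjacent_x_notin_branch u : (x, v) \in hE st -> u \in N -> u != x -> ~~ inT u x.
Proof.
move=> xv uN; have xN : x \in N by rewrite (mem_N_H inv) (heal_sym inv xv).
by apply: contraNN => ux; rewrite (branch_x_uniq uN xN ux (connect0 _ _)).
Qed.

Variable c : option T.
Hypothesis c_spec :
  match c with Some c0 => is_true (c0 \in N_H st x) | None => N_H st x = set0 end.

Lemma recipient_exists y : (x, y) \in hE st -> exists c0, c = Some c0 /\ (x, c0) \in hE st.
Proof.
move: c_spec; case: c => [c0 | N_x0] xy; first by exists c0; rewrite -(mem_N_H inv).
by have := xy; rewrite -(mem_N_H inv) N_x0 inE.
Qed.

Definition branches_transfer u0 m :=
  (forall y, y \in alive st -> y != x -> covered u0 y -> covered' m y) /\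
  (covered u0 x -> exists c0, c = Some c0 /\ (c0 = v \/ c0 \in survivors /\ covered' m c0)).

Lemma transfer_far m : ~~ [exists u in N, inT u x] -> branches_transfer m m.
Proof.
move=> far; split; last first.
  by case/exists_inP => u /setD1P [_ uN] ux; case/exists_inP: far; exists u.
move=> y _ _ /exists_inP [u /setD1P [um uN] uy].
have not_ux : ~~ inT u x by apply: contraNN far => ux; apply/exists_inP; exists u.
have ux : u != x by apply: contraNneq not_ux => ->; apply: connect0.
by apply/exists_inP; exists u; [rewrite in_setD1 um N_N' | apply: branch_keep].
Qed.

Lemma transfer_adjacent_keep m : (x, v) \in hE st -> m \in N -> m != x ->
  branches_transfer m m.
Proof.
move=> xv mN m_neq_x; have mS := N_adjacent_notin_Sx xv mN m_neq_x; split.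
  move=> y _ yx /exists_inP [u /setD1P [um uN] uy].
  have [ux | ux] := eqVneq u x; first by subst u; apply: branch_pieces uy yx.
  apply/exists_inP; exists u; first by rewrite in_setD1 um N_N'.
  exact: branch_keep uN (adjacent_x_notin_branch xv uN ux) _ uy.
move=> _; have [c0 [-> xc0]] := recipient_exists xv.
exists c0; split => //; have [-> | c0v] := eqVneq c0 v; [by left | right].
have c0S : c0 \in Sx by rewrite mem_Sx xc0 orbT.
by split; [apply: Sx_survivors | apply: Sx_covered'].
Qed.

Lemma transfer_adjacent_drop m : (x, v) \in hE st -> ~~ ((m \in N) && (m != x)) ->
  branches_transfer x m.
Proof.
move=> xv not_m; split; last first.
  by case/exists_inP => u /setD1P [ux uN]; rewrite (negbTE (adjacent_x_notin_branch xv uN ux)).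
move=> y _ _ /exists_inP [u /setD1P [ux uN] uy].
apply/exists_inP; exists u; last exact: branch_keep uN (adjacent_x_notin_branch xv uN ux) _ uy.
rewrite in_setD1 N_N' // andbT; apply: contraNneq not_m => um.
by rewrite -um uN ux.
Qed.

Lemma transfer_behind m u1 : (x, v) \notin hE st -> u1 \in N -> inT u1 x ->
  branches_transfer m m.
Proof.
move=> not_xv u1N u1x.
have N_neq_x u : u \in N -> u != x.
  rewrite (mem_N_H inv); apply: contraTneq => ->.
  by apply: contra not_xv; apply: (heal_sym inv).
have u1_neq_x := N_neq_x u1 u1N.
have not_ux u : u \in N -> u != u1 -> ~~ inT u x.
  by move=> uN; apply: contraNN => ux; rewrite (branch_x_uniq uN u1N ux u1x).
split.
  move=> y _ yx /exists_inP [u /setD1P [um uN] uy].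
  apply/exists_inP; exists u; first by rewrite in_setD1 um N_N' ?N_neq_x.
  have [uu1 | uu1] := eqVneq u u1; first by subst u; apply: branch_through_tree.
  exact: branch_keep uN (not_ux u uN uu1) _ uy.
case/exists_inP => u /setD1P [um uN] ux.
have uu1 := branch_x_uniq uN u1N ux u1x; subst u.
have [y /and3P [yx _ _]] := connect_neq_pred u1x u1_neq_x.
have [c0 [-> xc0]] := recipient_exists (heal_sym inv yx).
exists c0; split => //; right.
have c0v : c0 != v by apply: contraNneq not_xv => <-.
have c0x : c0 != x by apply: contraTneq xc0 => ->; apply: heal_irrefl.
have u1c0 : inT u1 c0.
  by apply: connect_trans u1x (connect1 _); rewrite /avoid /hrel xc0 eq_sym v_neq_x c0v.
have /andP [_ c0A] := heal_alive inv xc0.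
split; first by rewrite /survivors in_setD1 c0x c0A.
apply/exists_inP; exists u1; first by rewrite in_setD1 um N_N'.
exact: branch_through_tree.
Qed.

Lemma branches_transfer_exists m : exists u0, branches_transfer u0 m.
Proof.
have [/exists_inP [u1 u1N u1x] | far] := boolP [exists u in N, inT u x]; last first.
  by exists m; apply: transfer_far.
have [xv | not_xv] := boolP ((x, v) \in hE st); last first.
  by exists m; apply: transfer_behind u1N u1x.
have [/andP [mN m_neq_x] | not_m] := boolP ((m \in N) && (m != x)).
  by exists m; apply: transfer_adjacent_keep.
by exists x; apply: transfer_adjacent_drop.
Qed.

End Branches.

End Step.

Lemma dash_inv_step (T : finType) (R : realType) (e0 : rel T) (id0 : T -> R) :
  injective id0 -> forall st x c s st', dash_inv st -> step e0 id0 st x c s st' ->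
  dash_inv st'.
Proof.
move=> id0_inj st x c s st' inv [_ _ s_perm _ ->]; constructor => /=.
- exact: healE_sym.
- move=> a b; rewrite mem_healE => /orP [| /(treeE_Sx s_perm) /andP [aS bS]].
    rewrite (mem_keptE _ inv) => /and3P [/(heal_alive inv) /andP [aA bA] ax bx].
    by rewrite /survivors !in_setD1 ax bx aA bA.
  by rewrite !(Sx_survivors (id0 := id0) inv).
- move=> a; rewrite in_setU negb_or /restrict inE negb_and (graph_irrefl inv) /=.
  by apply/negP => /(tree_acyclic (s_uniq s_perm)); rewrite connect0.
- exact: (healE_acyclic inv s_perm id0_inj).
- exact: (new_cid_connect inv).
Qed.

Lemma dash_inv_reachable (T : finType) (R : realType) (e0 : rel T) (id0 : T -> R) :
  irreflexive e0 -> injective id0 -> forall st, reachable e0 id0 st -> dash_inv st.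
Proof.
move=> e0_irr id0_inj st; elim=> [| st0 v c s st' _ inv0 st0_st']; last first.
  exact: dash_inv_step inv0 st0_st'.
constructor => /= [a b | a b | a | a b | a b ab]; rewrite ?inE ?e0_irr //.
suff -> : a = b by [].
by apply: (connect_ind_last (P := eq a)) ab => // y z _ _; rewrite /hrel inE.
Qed.

Section WeightSums.
Variable T : finType.
Implicit Types (A N X : {set T}) (f w : T -> nat).

Lemma sum_sub_bigmax_le N f u0 :
  \sum_(u in N) f u - \max_(u in N) f u <= \sum_(u in N :\ u0) f u.
Proof.
have [u0N | u0N] := boolP (u0 \in N).
  have : f u0 <= \max_(u in N) f u by apply: leq_bigmax_cond.
  by rewrite [\sum_(u in N) _](big_setD1 u0 u0N) /=; lia.
suff -> : N :\ u0 = N by lia.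
by apply/setP => u; rewrite in_setD1; case: eqP => // ->; rewrite (negbTE u0N).
Qed.

Lemma sum_sub_bigmax_eq N f (d : T) :
  exists m, \sum_(u in N) f u - \max_(u in N) f u = \sum_(u in N :\ m) f u.
Proof.
have [-> | [u0 u0N]] := set_0Vmem N.
  by exists d; rewrite !big_pred0 // => u; rewrite !inE ?andbF.
have /(eq_bigmax_cond f) [m mN ->] : 0 < #|mem N| by apply/card_gt0P; exists u0.
by exists m; rewrite (big_setD1 m mN) /= addKn.
Qed.

Lemma sum_sum_exchange X A (P : rel T) w :
  \sum_(u in X) \sum_(y in A | P u y) w y = \sum_(y in A) \sum_(u in X | P u y) w y.
Proof.
rewrite (exchange_big_dep (mem A)) /=; last by move=> u y _ /andP [].
by apply: eq_bigr => y yA; apply: eq_bigl => u; rewrite yA.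
Qed.

Lemma sum_cover_disjoint X A (P : rel T) w :
  (forall u1 u2 y, u1 \in X -> u2 \in X -> P u1 y -> P u2 y -> u1 = u2) ->
  \sum_(u in X) \sum_(y in A | P u y) w y = \sum_(y in A | [exists u in X, P u y]) w y.
Proof.
move=> disj; rewrite sum_sum_exchange big_mkcondr /=; apply: eq_bigr => y _.
have [/exists_inP [u1 u1X Pu1] | none] := boolP [exists u in X, P u y].
  rewrite (bigD1 u1) /=; last by rewrite u1X.
  rewrite big1 ?addn0 // => u /andP [/andP [uX Pu]].
  by rewrite (disj _ _ _ uX u1X Pu Pu1) eqxx.
apply: big_pred0 => u; apply/andP => -[uX Pu].
by case/exists_inP: none; exists u.
Qed.

Lemma sum_cover_le X A (P : rel T) w :
  \sum_(y in A | [exists u in X, P u y]) w y <= \sum_(u in X) \sum_(y in A | P u y) w y.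
Proof.
rewrite sum_sum_exchange big_mkcondr /=; apply: leq_sum => y _.
case: (boolP [exists u in X, P u y]) => [/exists_inP [u1 u1X Pu1] | //].
by rewrite (bigD1 u1) /= ?u1X ?Pu1 // leq_addr.
Qed.

(* The right-hand side is written with the weights after the round, in which
   w(x) has moved to c. *)
Lemma weight_transfer_le A x v w (c : option T) (Yo Yn : pred T) :
  x \in A ->
  (forall y, y \in A -> y != x -> Yo y -> Yn y) ->
  (Yo x -> exists c0, c = Some c0 /\ (c0 = v \/ c0 \in A :\ x /\ Yn c0)) ->
  \sum_(y in A | Yo y) w y + w v <=
  \sum_(y in A :\ x | Yn y) (w y + (if c == Some y then w x else 0)) +
  (w v + (if c == Some v then w x else 0)).
Proof.
move=> xA Yon Yo_x.
rewrite big_mkcondr /= (big_setD1 x xA) /= big_split /=.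
have Yo_le : \sum_(y in A :\ x) (if Yo y then w y else 0) <= \sum_(y in A :\ x | Yn y) w y.
  rewrite [X in _ <= X]big_mkcondr /=; apply: leq_sum => y /setD1P [yx yA].
  by case: (boolP (Yo y)) => // /(Yon y yA yx) ->.
case: (boolP (Yo x)) => Yox; last by lia.
have [c0 [-> [-> | [c0A Ync0]]]] := Yo_x Yox; first by rewrite eqxx; lia.
have : w x <= \sum_(y in A :\ x | Yn y) (if Some c0 == Some y then w x else 0).
  by rewrite (bigD1 c0) /= ?c0A ?Ync0 // eqxx leq_addr.
lia.
Qed.

End WeightSums.

Lemma remv_step_mono (T : finType) (R : realType) (e0 : rel T) (id0 : T -> R) :
  forall st x c s st', dash_inv st -> step e0 id0 st x c s st' ->
  forall v, v != x -> remv st v <= remv st' v.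
Proof.
move=> st x c s st' inv [xA c_spec s_perm _ ->] v v_neq_x.
rewrite /remv /=; set st1 := State _ _ _ _ _.
have [m ->] := sum_sub_bigmax_eq (N_H st1 v) (compW st1 v) x.
have [u0 [covered_le x_moves]] := branches_transfer_exists inv s_perm v_neq_x c_spec m.
apply: leq_trans (leq_add (sum_sub_bigmax_le _ _ u0) (leqnn _)) _.
rewrite (@sum_cover_disjoint _ _ (alive st) (connect (avoid (hrel (hE st)) v))); last first.
  move=> u1 u2 y /setD1P [_ u1N] /setD1P [_ u2N] u1y u2y.
  apply: (branch_uniq inv u1N u2N).
  by apply: connect_trans u1y _; rewrite (sym_connect_sym (avoid_sym_heal inv v)).
apply: leq_trans (weight_transfer_le (wt st) xA covered_le x_moves) _.
by rewrite leq_add2r; apply: sum_cover_le.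
Qed.

Theorem lemma2 (T : finType) (R : realType) (e0 : rel T) (id0 : T -> R) :
  symmetric e0 -> irreflexive e0 -> (forall x y : T, connect e0 x y) ->
  injective id0 -> (forall x : T, (0 <= id0 x)%R /\ (id0 x <= 1)%R) ->
  forall (st : state T R) (x : T) (c : option T) (s : seq T) (st' : state T R),
    reachable e0 id0 st -> step e0 id0 st x c s st' ->
    forall v : T, v != x -> (remv st v <= remv st' v)%N.
Proof.
move=> _ e0_irr _ id0_inj _ st x c s st' st_reachable st_st'.
exact: remv_step_mono (dash_inv_reachable e0_irr id0_inj st_reachable) st_st'.
Qed.
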